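(* For every constant $c>0$ there is a function $\varepsilon(n)\to 0$ as $n\to\infty$ such that \[ \Pr\left[\Gamma(G(n,c/n)) \leq \left(\tfrac12+\varepsilon(n)\right)\frac{\ln n}{\ln\ln n}\right]\to 1 \quad\text{as } n\to\infty . \]
   Context: $G(n,p)$ denotes the Erdős–Rényi random graph on vertex set $\{1,\dots,n\}$ in which each pair of vertices is joined independently with probability $p$. The Grundy number $\Gamma(G)$ is the largest number of colors used by the first-fit coloring algorithm (which colors vertices in a given order, each with the smallest positive integer not used on its previously colored neighbors) over all vertex orderings. *)

From HB Require Import structures.
From mathcomp Require Import all_boot all_order all_algebra all_fingroup.
From mathcomp Require Import all_classical all_reals all_analysis.
Set Implicit Arguments. Unset Strict Implicit. Unset Printing Implicit Defensive.
Import Order.TTheory GRing.Theory Num.Theory.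

Definition mex1 (L : seq nat) : nat :=
  head 0%N [seq k <- iota 1 (size L).+1 | k \notin L].

(* first-fit colouring: vertices of s are coloured in the order of s;
   [done] are the already-coloured vertices, [col] their colours
   (uncoloured vertices have colour 0). *)
Fixpoint ff_aux (T : eqType) (adj : rel T) (done : seq T) (col : T -> nat)
    (s : seq T) : T -> nat :=
  match s with
  | [::] => col
  | x :: s' =>
      let c := mex1 [seq col y | y <- done & adj x y] in
      ff_aux adj (x :: done) (fun z => if z == x then c else col z) s'
  end.

Definition first_fit (T : eqType) (adj : rel T) (s : seq T) : T -> nat :=
  ff_aux adj [::] (fun _ => 0%N) s.

(* simple graph on 'I_n given by an edge set of 2-element subsets *)
Definition pairs (n : nat) : {set {set 'I_n}} := [set e : {set 'I_n} | #|e| == 2%N].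

Definition adj_of (n : nat) (E : {set {set 'I_n}}) : rel 'I_n :=
  fun x y => (x != y) && ([set x; y] \in E).

Definition ff_colors (n : nat) (E : {set {set 'I_n}}) (sigma : {perm 'I_n}) : nat :=
  let col := first_fit (adj_of E) [seq sigma i | i <- enum 'I_n] in
  (\max_(x : 'I_n) col x)%N.

Definition grundy (n : nat) (E : {set {set 'I_n}}) : nat :=
  (\max_(sigma : {perm 'I_n}) ff_colors E sigma)%N.

Definition gnp_prob (R : realType) (n : nat) (p : R)
    (P : {set {set 'I_n}} -> bool) : R :=
  (\sum_(E in powerset (pairs n) | P E)
      p ^+ #|E| * (1 - p) ^+ (#|pairs n| - #|E|))%R.

(* If first-fit gives some vertex [v] a colour at least [m + 2], then [v] has a
   neighbour [u] of colour [col v - 1], and each of [v] and [u] sees all colours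
   [1, ..., m] among its neighbours.  So the graph contains a double star: the edge
   [uv] together with [m] further edges at [v] and [m] at [u] ([2m + 1] edges; the
   two leaf sets may overlap).  There are at most [n^2 C(n,m)^2] of them, so by the
   union bound [G(n, c/n)] has Grundy number at least [m + 2] with probability at
   most [n^2 C(n,m)^2 (c/n)^(2m+1) <= n c^(2m+1) / (m!)^2].  As [ln (m!)^2] is about
   [2 m ln m], this is at most [d] once [m >= (1/2 + d) ln n / ln ln n - 2] and [n]
   is large.  Letting [d] decrease to [0] slowly enough (a diagonal argument) gives
   [eps]. *)

From HB Require Import structures.
From mathcomp Require Import all_boot all_order all_algebra all_fingroup.
From mathcomp Require Import all_classical all_reals all_analysis.
From mathcomp Require Import ring lra.
Import Order.TTheory GRing.Theory Num.Theory numFieldNormedType.Exports.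

Set Implicit Arguments. Unset Strict Implicit. Unset Printing Implicit Defensive.

Lemma mex1_mem (L : seq nat) j : 0 < j < mex1 L -> j \in L.
Proof.
rewrite /mex1; elim: (size L).+1 1 => [|len IH] a /=; first by rewrite andbF.
case: ifP => [aL|/negbFE aL] /=.
  by case/andP=> /leq_ltn_trans/[apply]; rewrite ltnn.
case/andP; rewrite leq_eqVlt => /orP[/eqP <- //|lt_aj lt_jm].
by apply: (IH a.+1); rewrite lt_aj.
Qed.

Section FirstFit.
Variables (T : eqType) (adj : rel T).

Definition greedy_colouring (col : T -> nat) :=
  forall x j, 0 < j < col x -> exists2 y, adj x y & col y = j.

Definition greedy_on (done : seq T) (col : T -> nat) :=
  forall x j, 0 < j < col x -> exists y, [/\ y \in done, adj x y & col y = j].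

Lemma greedy_on_ff_aux s done col : uniq s -> {in s, forall x, x \notin done} ->
  greedy_on done col -> greedy_colouring (ff_aux adj done col s).
Proof.
elim: s done col => [|x s IH] done col /=.
  by move=> _ _ hcol z j /hcol [y [_ azy cy]]; exists y.
case/andP=> xs us fresh hcol; apply: IH => //.
  move=> z zs; rewrite in_cons negb_or fresh ?inE ?zs ?orbT // andbT.
  by apply: contraNneq xs => <-.
have xD : x \notin done by rewrite fresh ?inE ?eqxx.
have col_old y : y \in done -> (if y == x then mex1 [seq col y | y <- done & adj x y]
                                else col y) = col y.
  by move=> yD; case: eqP => // yx; move: xD; rewrite -yx yD.
move=> z j; case: ifP => [/eqP -> /mex1_mem|_ /hcol [y [yD azy cy]]].
  case/mapP => y; rewrite mem_filter => /andP[axy yD] ->.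
  by exists y; rewrite ?inE ?yD ?orbT ?col_old.
by exists y; rewrite ?inE ?yD ?orbT ?col_old.
Qed.

Lemma first_fit_greedy s : uniq s -> greedy_colouring (first_fit adj s).
Proof. by move=> us; apply: greedy_on_ff_aux => // x j /andP[/ltn_trans/[apply]]. Qed.

End FirstFit.

Lemma bigmax_witness (I : finType) (F : I -> nat) k :
  0 < k -> k <= \max_i F i -> exists i, k <= F i.
Proof.
move=> k0 le_k_max; apply/existsP; apply: contraLR le_k_max => /existsPn kF.
rewrite -ltnNge -(ltn_predK k0) ltnS; apply/bigmax_leqP => i _.
by rewrite -ltnS (ltn_predK k0) ltnNge kF.
Qed.

Lemma grundy_greedy n (E : {set {set 'I_n}}) k : 0 < k -> k <= grundy E ->
  exists2 col, greedy_colouring (adj_of E) col & exists v, k <= col v.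
Proof.
move=> k0 /(bigmax_witness k0)[sigma /(bigmax_witness k0) col_v].
exists (first_fit (adj_of E) [seq sigma i | i <- enum 'I_n]) => //.
by apply: first_fit_greedy; rewrite map_inj_uniq ?enum_uniq //; exact: perm_inj.
Qed.

Section DoubleStar.
Variable n : nat.
Implicit Types (v u : 'I_n) (A B : {set 'I_n}).

Definition star v A : {set {set 'I_n}} := [set [set v; x] | x in A].

Definition double_star v u A B := [set [set v; u]] :|: (star v A :|: star u B).

Definition double_star_shape m v u A B :=
  [&& v != u, #|A| == m, #|B| == m, v \notin A, u \notin A, v \notin B & u \notin B].

Lemma card_star v A : v \notin A -> #|star v A| = #|A|.
Proof.
move=> vA; apply: card_in_imset => x y xA _ eq_xy.
have /set2P[xv|//] : x \in [set v; y] by rewrite -eq_xy set22.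
by move: vA; rewrite -xv xA.
Qed.

Lemma mem_star v A e w : e \in star v A -> w \in e -> (w == v) || (w \in A).
Proof. by case/imsetP=> x xA -> /set2P[->|->]; rewrite ?eqxx ?xA ?orbT. Qed.

Lemma greedy_colour_classes (adj : rel 'I_n) col z m :
  greedy_colouring adj col -> m < col z ->
  exists2 A : {set 'I_n}, #|A| = m & {in A, forall y, adj z y && (0 < col y <= m)}.
Proof.
move=> greedy lt_m_z.
have colP (j : 'I_m) : exists y, adj z y && (col y == j.+1).
  have [|y azy <-] := greedy z j.+1; first by rewrite /= (leq_ltn_trans (ltn_ord j)).
  by exists y; rewrite azy eqxx.
pose f j := xchoose (colP j).
have fP j : adj z (f j) && (col (f j) == j.+1) := xchooseP (colP j).
exists [set f j | j : 'I_m].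
  rewrite card_imset ?card_ord // => i j eq_f; apply: val_inj.
  by move: (fP i) (fP j); rewrite eq_f => /andP[_ /eqP ->] /andP[_ /eqP []].
by move=> _ /imsetP[j _ ->]; case/andP: (fP j) => -> /eqP ->; apply: ltn_ord.
Qed.

Lemma greedy_double_star (E : {set {set 'I_n}}) col v m :
  greedy_colouring (adj_of E) col -> m.+2 <= col v ->
  exists u A B, double_star_shape m v u A B && (double_star v u A B \subset E).
Proof.
move=> greedy lt_m_v.
have [|u /andP[vu E_vu] col_u] := greedy v (col v).-1.
  by case: (col v) lt_m_v => [|[|k]] //= _; rewrite ltnSn.
have lt_m_u : m < col u by rewrite col_u -ltnS prednK ?(leq_trans _ lt_m_v).
have [A cardA adjA] := greedy_colour_classes greedy (ltnW lt_m_v).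
have [B cardB adjB] := greedy_colour_classes greedy lt_m_u.
exists u, A, B; apply/andP; split.
  rewrite /double_star_shape vu cardA cardB !eqxx /=.
  apply/and4P; split; apply/negP.
  - by move/adjA; rewrite /adj_of eqxx.
  - by move/adjA/and3P=> [_ _]; rewrite leqNgt lt_m_u.
  - by move/adjB/and3P=> [_ _]; rewrite leqNgt (ltn_trans _ lt_m_v).
  - by move/adjB; rewrite /adj_of eqxx.
apply/fintype.subsetP => e; rewrite !inE => /or3P[/eqP -> //||].
- by case/imsetP=> x /adjA /andP[/andP[_ ?] _] ->.
- by case/imsetP=> y /adjB /andP[/andP[_ ?] _] ->.
Qed.

Lemma double_star_pairs m v u A B :
  double_star_shape m v u A B -> double_star v u A B \subset pairs n.
Proof.
case/and5P=> vu _ _ vA /and3P[_ _ uB].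
have pair_in x y : x != y -> [set x; y] \in pairs n by move=> xy; rewrite inE cards2 xy.
apply/fintype.subsetP => e; rewrite !finset.in_setU finset.in_set1.
case/or3P=> [/eqP -> | |]; first exact: pair_in.
- by case/imsetP=> x xA ->; apply: pair_in; apply: contraNneq vA => ->.
- by case/imsetP=> y yB ->; apply: pair_in; apply: contraNneq uB => ->.
Qed.

Lemma card_double_star m v u A B :
  double_star_shape m v u A B -> #|double_star v u A B| = (2 * m).+1.
Proof.
case/and5P=> vu /eqP cardA /eqP cardB vA /and3P[uA vB uB].
have [cardX cardY] := (card_star vA, card_star uB).
have disjXY : star v A :&: star u B = finset.set0.
  apply/finset.setP => e; rewrite !inE; apply/negP => /andP[/imsetP[x _ ->]].
  by move/mem_star/(_ (set21 v x)); rewrite (negbTE vu) (negbTE vB).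
have vuXY : [set v; u] \notin star v A :|: star u B.
  rewrite finset.in_setU negb_or; apply/andP; split; apply/negP.
    by move/mem_star/(_ (set22 v u)); rewrite eq_sym (negbTE vu) (negbTE uA).
  by move/mem_star/(_ (set21 v u)); rewrite (negbTE vu) (negbTE vB).
rewrite /double_star cardsU1 vuXY cardsU disjXY cards0 subn0 cardX cardY cardA cardB.
by rewrite addnn -mul2n.
Qed.

Lemma grundy_double_star (E : {set {set 'I_n}}) m : m.+2 <= grundy E ->
  exists v u A B, double_star_shape m v u A B && (double_star v u A B \subset E).
Proof.
case/(grundy_greedy (ltn0Sn _))=> col greedy [v lt_m_v].
by exists v; apply: greedy_double_star lt_m_v.
Qed.

End DoubleStar.

Lemma ffact_leq_expn n m : n ^_ m <= n ^ m.
Proof. by elim: m => // m IH; rewrite ffactnSr expnSr leq_mul ?leq_subr. Qed.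

Local Open Scope ring_scope.

Section GnpProbability.
Variables (R : realType) (n : nat) (p : R).
Notation graph := {set {set 'I_n}}.
Implicit Types (E F : graph) (P Q : graph -> bool).

Definition gnp_weight E : R :=
  if E \subset pairs n then p ^+ #|E| * (1 - p) ^+ (#|pairs n| - #|E|) else 0.

Lemma gnp_probE P : gnp_prob p P = \sum_(E | P E) gnp_weight E.
Proof.
rewrite /gnp_prob big_mkcond /= [RHS]big_mkcond; apply: eq_bigr => E _.
by rewrite inE /gnp_weight; case: (P E); case: (E \subset _).
Qed.

Definition edge_factor F (e : {set 'I_n}) (b : bool) : R :=
  if b then (if e \in pairs n then p else 0)
  else if e \in F then 0 else if e \in pairs n then 1 - p else 1.

Lemma prod_edge_factor F E : F \subset pairs n ->
  \prod_e edge_factor F e (e \in E) = if F \subset E then gnp_weight E else 0.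
Proof.
move=> F_pairs; rewrite /gnp_weight; case: (boolP (F \subset E)) => [F_E|].
  case: (boolP (E \subset pairs n)) => [E_pairs|/subsetPn[e eE /negbTE e_pairs]].
    rewrite (bigID (mem E)) /= (eq_bigr (fun=> p)) => [|e eE]; last first.
      by rewrite /edge_factor eE (fintype.subsetP E_pairs).
    rewrite prodr_const (eq_bigr (fun e => if e \in pairs n then 1 - p else 1)).
      rewrite -big_mkcondr prodr_const; congr (_ * _ ^+ _).
      transitivity #|pairs n :\: E|; first by apply: eq_card => e; rewrite finset.in_setD.
      by rewrite cardsD (finset.setIidPr E_pairs).
    move=> e /negbTE eE; rewrite /edge_factor eE.
    by case: ifP => // eF; move: eE; rewrite (fintype.subsetP F_E).
  by rewrite (bigD1 e) //= /edge_factor eE e_pairs mul0r.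
case/subsetPn=> e eF /negbTE eE.
by rewrite (bigD1 e) //= /edge_factor eE eF mul0r.
Qed.

Lemma gnp_prob_superset F : F \subset pairs n ->
  gnp_prob p (fun E => F \subset E) = p ^+ #|F|.
Proof.
move=> F_pairs; rewrite gnp_probE big_mkcond /=.
under eq_bigr => E _ do rewrite -prod_edge_factor //.
have -> : \sum_(E : graph) \prod_e edge_factor F e (e \in E)
        = \sum_(E : graph) \prod_e (if e \in E then edge_factor F e true
                                     else edge_factor F e false).
  by apply: eq_bigr => E _; apply: eq_bigr => e _; case: (e \in E).
(* A sum over all edge sets of a product of per-edge factors factorises. *)
rewrite -bigA_distr (eq_bigr (fun e => if e \in F then p else 1)) => [|e _].
  by rewrite -big_mkcond prodr_const.
rewrite /edge_factor /=; case: (boolP (e \in F)) => [eF|_].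
  by rewrite (fintype.subsetP F_pairs _ eF) addr0.
by case: ifP; rewrite ?add0r ?subrKC.
Qed.

Hypotheses (p_ge0 : 0 <= p) (p_le1 : p <= 1).

Lemma gnp_weight_ge0 E : 0 <= gnp_weight E.
Proof.
by rewrite /gnp_weight; case: ifP => // _; rewrite mulr_ge0 ?exprn_ge0 ?subr_ge0.
Qed.

Lemma gnp_prob_ge0 P : 0 <= gnp_prob p P.
Proof. by rewrite gnp_probE sumr_ge0 // => E _; apply: gnp_weight_ge0. Qed.

Lemma le_gnp_prob P Q : (forall E, P E -> Q E) -> gnp_prob p P <= gnp_prob p Q.
Proof.
move=> PQ; rewrite !gnp_probE big_mkcond [leRHS]big_mkcond /=; apply: ler_sum => E _.
by case: (boolP (P E)) => [/PQ ->|_] //; case: ifP => // _; apply: gnp_weight_ge0.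
Qed.

Lemma gnp_probT : gnp_prob p (fun _ : graph => true) = 1.
Proof.
rewrite -(expr0 p) -(@cards0 {set 'I_n}) -gnp_prob_superset ?finset.sub0set //.
by rewrite !gnp_probE; apply: eq_bigl => E; rewrite finset.sub0set.
Qed.

Lemma gnp_probC P : gnp_prob p P = 1 - gnp_prob p (fun E => ~~ P E).
Proof. by rewrite -gnp_probT !gnp_probE [X in _ = X - _](bigID P) /= addrK. Qed.

Lemma gnp_prob_le1 P : gnp_prob p P <= 1.
Proof. by rewrite gnp_probC gerBl gnp_prob_ge0. Qed.

Lemma gnp_prob_union_bound (I : finType) (Q : I -> graph -> bool) P :
  (forall E, P E -> exists i, Q i E) -> gnp_prob p P <= \sum_i gnp_prob p (Q i).
Proof.
move=> PQ; under eq_bigr => i _ do rewrite gnp_probE big_mkcond.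
rewrite exchange_big gnp_probE big_mkcond /=; apply: ler_sum => E _.
have weight_ge0 i : 0 <= (if Q i E then gnp_weight E else 0).
  by case: ifP => // _; exact: gnp_weight_ge0.
case: ifP => [/PQ[i Qi]|_]; last by rewrite sumr_ge0.
by rewrite (bigD1 i) //= Qi lerDl sumr_ge0.
Qed.

End GnpProbability.

Lemma gnp_prob_grundy_ge (R : realType) (n m : nat) (p : R) :
  0 <= p -> p <= 1 ->
  gnp_prob p (fun E : {set {set 'I_n}} => (m.+2 <= grundy E)%N)
    <= (n * n * 'C(n, m) * 'C(n, m))%:R * p ^+ (2 * m).+1.
Proof.
move=> p_ge0 p_le1.
pose Q (t : 'I_n * 'I_n * {set 'I_n} * {set 'I_n}) (E : {set {set 'I_n}}) :=
  let: (v, u, A, B) := t in double_star_shape m v u A B && (double_star v u A B \subset E).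
pose sized := [set A : {set 'I_n} | #|A| == m].
pose S := finset.setX (finset.setX (finset.setX [set: 'I_n] [set: 'I_n]) sized) sized.
have -> : (n * n * 'C(n, m) * 'C(n, m))%N = #|S|.
  by rewrite !cardsX !cardsT card_draws card_ord.
apply: le_trans (gnp_prob_union_bound p_ge0 p_le1 (Q := Q) _) _.
  by move=> E /grundy_double_star[v [u [A [B ok]]]]; exists (v, u, A, B).
rewrite -sum1_card natr_sum mulr_suml [leRHS]big_mkcond /=; apply: ler_sum.
move=> [[[v u] A] B] _; rewrite mul1r.
case: (boolP (double_star_shape m v u A B)) => ok.
  have inS : (v, u, A, B) \in S.
    by case/and5P: ok => _ cardA cardB _ _; rewrite !finset.in_setX !inE cardA cardB.
  rewrite inS -(card_double_star ok) -(gnp_prob_superset p (double_star_pairs ok)).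
  by apply: le_gnp_prob => // E; rewrite /Q ok.
rewrite gnp_probE big_pred0 => [|E]; last by rewrite /Q (negbTE ok).
by case: ifP => // _; rewrite exprn_ge0.
Qed.

Local Open Scope classical_set_scope.

Section Asymptotics.
Variable R : realType.
Implicit Types (a e x y : R).

Lemma ln_le_mul e x : 0 < e -> 4 / e ^+ 2 <= x -> ln x <= e * x.
Proof.
move=> e0 hx; have x0 : 0 < x by apply: lt_le_trans hx; rewrite divr_gt0 ?exprn_gt0.
pose s := Num.sqrt x; have s0 : 0 < s by rewrite sqrtr_gt0.
have xs : x = s ^+ 2 by rewrite sqr_sqrtr // ltW.
have es : 2 <= e * s.
  rewrite xs ler_pdivrMr ?exprn_gt0 // in hx.
  have : 0 < e * s by rewrite mulr_gt0.
  by rewrite !expr2 in hx; nra.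
by rewrite xs lnXn // mulr2n; have := ln_sublinear s0; rewrite expr2; nra.
Qed.

Lemma near_ln_le a e : 0 < e -> \forall x \near +oo, ln x + a <= e * x.
Proof.
move=> e0; have e20 : 0 < e / 2 by rewrite divr_gt0.
near=> x.
have : ln x <= e / 2 * x by apply: ln_le_mul => //; near: x; apply: nbhs_pinfty_ge.
have : a <= e / 2 * x.
  by rewrite mulrC -ler_pdivrMr //; near: x; apply: nbhs_pinfty_ge.
lra.
Unshelve. all: by end_near.
Qed.

Lemma ln_cvgy : @ln R x @[x --> +oo] --> +oo.
Proof.
apply/cvgryPge => M; near=> x.
have x0 : 0 < x by near: x; apply: nbhs_pinfty_gt.
by rewrite -[M]expRK ler_ln ?posrE ?expR_gt0 //; near: x; apply: nbhs_pinfty_ge.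
Unshelve. all: by end_near.
Qed.

Lemma near_le_div_ln a : \forall x \near +oo, a <= x / ln x.
Proof.
have e0 : 0 < (1 + `|a|)^-1 by rewrite invr_gt0 ltr_pwDl.
near=> x.
have lnx0 : 0 < ln x by apply: ln_gt0; near: x; apply: nbhs_pinfty_gt.
have : ln x + 0 <= (1 + `|a|)^-1 * x by near: x; apply: near_ln_le.
rewrite addr0 mulrC => ha.
have : 1 + `|a| <= x / ln x.
  by rewrite ler_pdivlMr // mulrC -ler_pdivlMr ?ltr_pwDl.
by apply: le_trans; have := ler_norm a; lra.
Unshelve. all: by end_near.
Qed.

Lemma ln_fact_ge (m : nat) : m%:R * ln (m%:R : R) - m%:R <= ln m`!%:R.
Proof.
elim: m => [|m IH]; first by rewrite mul0r subr0 fact0 ln1.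
rewrite factS natrM lnM ?posrE ?ltr0n ?fact_gt0 //.
case: m IH => [|m] IH; first by rewrite fact0 ln1 mul1r; lra.
set a : R := m.+1%:R; have a0 : 0 < a by rewrite ltr0n.
have a1 : (m.+2%:R : R) = a + 1 by rewrite -natr1.
have ln_step : a * ln (a + 1) <= a * ln a + 1.
  have -> : a + 1 = a * (1 + a^-1) by rewrite mulrDr mulr1 mulfV ?gt_eqF.
  rewrite lnM ?posrE ?addr_gt0 ?invr_gt0 // mulrDr lerD2l.
  rewrite -[leRHS](mulfV (lt0r_neq0 a0)) ler_wpM2l ?(ltW a0) // le_ln1Dx //.
  by apply: lt_trans (ltrN10 R) _; rewrite invr_gt0.
rewrite a1 mulrDl mul1r; rewrite -/a in IH; lra.
Qed.

Lemma le_mul_ln_sub a x y : expR a <= x <= y -> x * (ln x - a) <= y * (ln y - a).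
Proof.
case/andP=> ax xy; have x0 : 0 < x by apply: lt_le_trans (expR_gt0 a) ax.
have a_lnx : a <= ln x by rewrite -[a]expRK ler_ln ?posrE ?expR_gt0.
apply: ler_pM; rewrite ?subr_ge0 ?lerD2r ?ler_ln ?posrE ?(ltW x0) //.
exact: lt_le_trans x0 xy.
Qed.

Lemma ln_fact_ge_mul_ln K x (m : nat) : expR (1 + K) <= x <= m%:R ->
  x * (ln x - (1 + K)) + K * m%:R <= ln m`!%:R.
Proof. by move/le_mul_ln_sub; have := ln_fact_ge m; lra. Qed.

Lemma ln_fact_sqr_ge (c d : R) : 0 < c -> 0 < d ->
  \forall l \near +oo, forall m : nat, (2^-1 + d) * (l / ln l) - 2 <= m%:R ->
    l + (2 * m%:R + 1) * ln c <= ln d + 2 * ln m`!%:R.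
Proof.
move=> c0 d0.
pose K := ln (1 + c); pose al := (1 + d) / 2; pose et := d / (2 + 2 * d).
have K0 : 0 <= K by rewrite ln_ge0 // lerDl ltW.
have cK : ln c <= K by rewrite ler_ln ?posrE ?addr_gt0 // lerDr.
have al0 : 0 < al by rewrite divr_gt0 ?addr_gt0.
have et0 : 0 < et by rewrite divr_gt0 ?addr_gt0 ?mulr_gt0.
have al_et : al * (1 - et) = (2 + d) / 4 by rewrite /al /et; field; lra.
near=> l.
have l1 : 1 < l by near: l; apply: nbhs_pinfty_gt.
have r_big : 4 / d + expR (1 + K) / al <= l / ln l by near: l; apply: near_le_div_ln.
have lnL : ln (ln l) + (1 + K - ln al) <= et * ln l.
  by near: l; exact: ln_cvgy (near_ln_le (1 + K - ln al) et0).
have l_big : 2 / d * (K - ln d) <= l by near: l; exact: nbhs_pinfty_ge (num_real _).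
move=> m hm.
have L0 : 0 < ln l by apply: ln_gt0.
set L := ln l in L0 r_big lnL hm *; set r := l / L in r_big hm *.
have rL : r * L = l by rewrite /r divfK ?lt0r_neq0.
(* [r * al] lies below [m], and since [ln (r * al) = L - ln L + ln al] we get
   [r * al * (ln (r * al) - 1 - K) >= al * (1 - et) * l = (1/2 + d/4) * l]. *)
have [q1 q2] : 0 <= 4 / d /\ 0 <= expR (1 + K) / al.
  by split; apply: divr_ge0; rewrite ?expR_ge0 ?(ltW d0) ?(ltW al0).
have dr : 4 <= r * d by rewrite -ler_pdivrMr //; lra.
have xK : expR (1 + K) <= r * al by rewrite -ler_pdivrMr //; lra.
have xm : r * al <= m%:R.
  have : r * al = 2^-1 * r + 2^-1 * (r * d) by rewrite /al; field.
  have : (2^-1 + d) * r = 2^-1 * r + r * d by ring.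
  lra.
have r0 : 0 < r by apply: lt_le_trans r_big; rewrite ltr_pwDl ?divr_gt0 ?expR_gt0.
have ln_x : ln (r * al) = ln al + L - ln L.
  by rewrite lnM ?posrE // ln_div ?posrE ?L0 ?(lt_trans ltr01 l1) // -/L; ring.
have main : (2 + d) / 4 * l <= r * al * (ln (r * al) - (1 + K)).
  rewrite -al_et -rL (_ : _ * (r * L) = r * al * ((1 - et) * L)); last by ring.
  by apply: ler_wpM2l; [rewrite mulr_ge0 // ltW | lra].
have : r * al * (ln (r * al) - (1 + K)) + K * m%:R <= ln m`!%:R.
  by apply: ln_fact_ge_mul_ln; rewrite xK xm.
have : (2 * m%:R + 1) * ln c <= (2 * m%:R + 1) * K.
  by apply: ler_wpM2l cK; rewrite addr_ge0 ?mulr_ge0.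
have : K - ln d <= d / 2 * l.
  have : d / 2 * (2 / d * (K - ln d)) = K - ln d by field; lra.
  by move=> <-; apply: ler_wpM2l l_big; rewrite divr_ge0 // ltW.
lra.
Unshelve. all: by end_near.
Qed.

End Asymptotics.

Section Bounds.
Variable R : realType.

Lemma double_star_count_le (n m : nat) (c : R) : (0 < n)%N -> 0 <= c ->
  (n * n * 'C(n, m) * 'C(n, m))%:R * (c / n%:R) ^+ (2 * m).+1
    <= n%:R * c ^+ (2 * m).+1 / m`!%:R ^+ 2.
Proof.
move=> n0 c0; set N : R := n%:R; set b : R := 'C(n, m)%:R; set f : R := m`!%:R.
have N0 : 0 < N by rewrite ltr0n.
have f0 : 0 < f by rewrite ltr0n fact_gt0.
have bf : b * f <= N ^+ m.
  by rewrite -natrM -natrX ler_nat bin_ffact ffact_leq_expn.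
have -> : (n * n * 'C(n, m) * 'C(n, m))%:R * (c / N) ^+ (2 * m).+1
          = N * c ^+ (2 * m).+1 * (b / N ^+ m) ^+ 2.
  have eN : N ^+ (2 * m).+1 = N * (N ^+ m) ^+ 2 by rewrite exprS -exprM mulnC.
  by rewrite !natrM -/N -/b expr_div_n eN; field; rewrite ?expf_neq0 ?lt0r_neq0.
rewrite -!mulrA !ler_wpM2l ?exprn_ge0 ?(ltW N0) // -exprVn.
apply: lerXn2r; rewrite ?nnegrE ?divr_ge0 ?invr_ge0 ?exprn_ge0 ?ler0n ?(ltW N0) ?(ltW f0) //.
by rewrite ler_pdivrMr ?exprn_gt0 // ler_pdivlMl // mulrC.
Qed.

Lemma near_fact_sqr_ge (c d : R) : 0 < c -> 0 < d ->
  \forall N \near +oo, forall m : nat, (2^-1 + d) * (ln N / ln (ln N)) - 2 <= m%:R ->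
    N * c ^+ (2 * m).+1 / m`!%:R ^+ 2 <= d.
Proof.
move=> c0 d0; near=> N.
have N0 : 0 < N by near: N; exact: nbhs_pinfty_gt (num_real 0).
have ln_bound : forall m : nat, (2^-1 + d) * (ln N / ln (ln N)) - 2 <= m%:R ->
    ln N + (2 * m%:R + 1) * ln c <= ln d + 2 * ln m`!%:R.
  by near: N; exact: ln_cvgy (ln_fact_sqr_ge c0 d0).
move=> m /ln_bound hm.
have f0 : 0 < m`!%:R ^+ 2 :> R by rewrite exprn_gt0 ?ltr0n ?fact_gt0.
rewrite ler_pdivrMr // -ler_ln ?posrE ?mulr_gt0 ?exprn_gt0 //.
rewrite !lnM ?posrE ?exprn_gt0 ?ltr0n ?fact_gt0 // lnXn //.
by rewrite -[ln c *+ _]mulr_natl -natr1 natrM; lra.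
Unshelve. all: by end_near.
Qed.

Lemma near_gnp_prob_grundy_le (c d : R) : 0 < c -> 0 < d ->
  \forall n \near \oo, 1 - d <= gnp_prob (c / n%:R)
    (fun E : {set {set 'I_n}} =>
       (grundy E)%:R <= (2^-1 + d) * (ln (n%:R : R) / ln (ln (n%:R : R)))).
Proof.
move=> c0 d0; near=> n.
have c_n : c <= n%:R by near: n; exact: cvgr_idn (nbhs_pinfty_ge (num_real c)).
have ratio : 2 <= ln (n%:R : R) / ln (ln n%:R).
  by near: n; exact: cvgr_idn (ln_cvgy (near_le_div_ln 2)).
have fact_bound : forall m : nat,
    (2^-1 + d) * (ln (n%:R : R) / ln (ln n%:R)) - 2 <= m%:R ->
    n%:R * c ^+ (2 * m).+1 / m`!%:R ^+ 2 <= d.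
  by near: n; exact: cvgr_idn (near_fact_sqr_ge c0 d0).
set t := (2^-1 + d) * (ln (n%:R : R) / ln (ln n%:R)) in fact_bound *.
have n_gt0 : (0 < n)%N by rewrite -(ltr0n R); apply: lt_le_trans c_n.
have p_ge0 : 0 <= c / n%:R by rewrite divr_ge0 ?ler0n ?(ltW c0).
have p_le1 : c / n%:R <= 1 by rewrite ler_pdivrMr ?ltr0n ?mul1r.
have t1 : 1 <= t.
  by rewrite /t mulrDl; have := mulr_ge0 (ltW d0) (le_trans (ler0n R 2) ratio); lra.
have [m truncT] : exists m, Num.truncn t = m.+1.
  by exists (Num.truncn t).-1; rewrite prednK // truncn_gt0.
rewrite gnp_probC lerD2l lerN2.
apply: le_trans (le_gnp_prob p_ge0 p_le1 (Q := fun E => (m.+2 <= grundy E)%N) _) _.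
  by move=> E; rewrite -ltNge -truncn_lt_nat ?truncT // (le_trans ler01 t1).
apply: le_trans (gnp_prob_grundy_ge n m p_ge0 p_le1) _.
apply: le_trans (double_star_count_le m n_gt0 (ltW c0)) (fact_bound m _).
by have := truncnS_gt t; rewrite truncT -natr1; lra.
Unshelve. all: by end_near.
Qed.

End Bounds.

Lemma vanishing_rate (R : realType) (P : R -> nat -> R) :
  (\forall n \near \oo, forall d, 0 <= P d n <= 1) ->
  (forall d, 0 < d -> \forall n \near \oo, 1 - d <= P d n) ->
  exists eps : nat -> R,
    eps n @[n --> \oo] --> (0 : R) /\ P (eps n) n @[n --> \oo] --> (1 : R).
Proof.
move=> P01 P_near.
pose good n (j : 'I_n.+1) := (j == 0 :> nat) || (1 - j.+1%:R^-1 <= P j.+1%:R^-1 n).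
(* [eps n] is [1 / (j + 1)] for the largest [j <= n] at which the bound for
   [d = 1 / (j + 1)] already holds ([j = 0] is always admissible). *)
pose eps n : R := ((\max_(j < n.+1 | good n j) j).+1%:R)^-1.
have eps_ge0 n : 0 <= eps n by rewrite invr_ge0 ler0n.
have eps_good n : exists2 j : 'I_n.+1, good n j & eps n = j.+1%:R^-1.
  exists [arg max_(j > ord0 | good n j) j]; first by case: arg_maxnP.
  by rewrite /eps (bigop.bigmax_eq_arg ord0).
have eps_small e : 0 < e -> \forall n \near \oo, eps n <= e.
  move=> e0; pose k := Num.truncn e^-1.
  have k_e : k.+1%:R^-1 <= e.
    by rewrite invf_ple ?posrE ?ltr0n // ltW // truncnS_gt.
  have kP : 0 < k.+1%:R^-1 :> R by rewrite invr_gt0 ltr0n.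
  near=> n; apply: le_trans k_e; rewrite lef_pV2 ?posrE ?ltr0n // ler_nat ltnS.
  have k_n : (k < n.+1)%N by rewrite ltnS; near: n; exact: nbhs_infty_ge.
  apply: (leq_bigmax_cond (Ordinal k_n)); rewrite /good orbC /=.
  by apply/orP; left; near: n; exact: P_near.
exists eps; split; apply/cvgrPdist_le => e e0.
  by apply: filterS (eps_small e e0) => n; rewrite sub0r normrN ger0_norm.
near=> n.
have P01n : forall d, 0 <= P d n <= 1 by near: n.
have [j good_j eps_j] := eps_good n.
have : 1 - eps n <= P (eps n) n.
  rewrite eps_j; case/orP: good_j => // /eqP ->.
  by rewrite invr1 subrr; case/andP: (P01n 1).
have /andP[_ P_le1] := P01n (eps n).
have : eps n <= e by near: n; exact: eps_small.
by rewrite ger0_norm ?subr_ge0 //; lra.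
Unshelve. all: by end_near.
Qed.

Theorem corollary2 (R : realType) (c : R) (hc : 0 < c) :
  exists eps : nat -> R,
    (eps n @[n --> \oo] --> (0 : R)) /\
    ((@gnp_prob R n (c / n%:R)
          (fun E => (@grundy n E)%:R <=
                    (2^-1 + eps n) * (ln (n%:R : R) / ln (ln (n%:R : R)))))
       @[n --> \oo] --> (1 : R)).
Proof.
pose P d n := @gnp_prob R n (c / n%:R) (fun E => (@grundy n E)%:R <=
                 (2^-1 + d) * (ln (n%:R : R) / ln (ln (n%:R : R)))).
apply: (@vanishing_rate R P) => [|d d0]; last exact: near_gnp_prob_grundy_le.
near=> n => d.
have c_n : c <= n%:R by near: n; exact: cvgr_idn (nbhs_pinfty_ge (num_real c)).
have n_gt0 : 0 < n%:R :> R := lt_le_trans hc c_n.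
have p_ge0 : 0 <= c / n%:R by rewrite divr_ge0 ?(ltW hc) ?(ltW n_gt0).
have p_le1 : c / n%:R <= 1 by rewrite ler_pdivrMr ?mul1r.
by rewrite gnp_prob_ge0 ?gnp_prob_le1.
Unshelve. all: by end_near.
Qed.
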